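(* Let $P$ be a positive program (heads may be arbitrary c-atoms). If a set of atoms $M$ is an answer set of $P$ in the sense that $M$ is a model of $P$ and $M$ is an answer set of the positive basic program $inst(P,M)$, then $M$ is an answer set of $P$ in the sense of Marek and Remmel, i.e., $M$ is a model of $P$ and $M$ equals the least fixpoint of the one-step provability operator of $NSS(P,M)$.
   Context: Fix a countable set $\mathcal{A}$ of atoms. A c-atom is $A=(A_d,A_c)$, $A_d\subseteq\mathcal{A}$, $A_c\subseteq 2^{A_d}$; $(\{p\},\{\{p\}\})$ is the elementary c-atom $p$; $\bot=(\mathcal{A},\emptyset)$. A positive rule has the form $A\leftarrow A_1,\dots,A_k$ with c-atoms; $head(r)=A$, $pos(r)=body(r)=\{A_1,\dots,A_k\}$; a positive program is a set of such rules. $S\models A$ iff $S\cap A_d\in A_c$; $S\models body(r)$ iff $S\models A_i$ for all $i$; model = satisfies every rule (head holds or body fails). Conditional satisfaction: $S\models_M A$ iff $S\models A$ and every $I$ with $S\cap A_d\subseteq I\subseteq M\cap A_d$ lies in $A_c$. For a positive program $Q$ whose heads are elementary or $\bot$: $T_Q(S,M)=\{a\mid \exists r\in Q,\ head(r)=(\{a\},\{\{a\}\}),\ S\models_M B\ \forall B\in pos(r)\}$, $T^0_Q(\emptyset,M)=\emptyset$, $T^{i+1}_Q(\emptyset,M)=T_Q(T^i_Q(\emptyset,M),M)$, $T^\infty_Q(\emptyset,M)=\bigcup_iT^i_Q(\emptyset,M)$; a model $M$ of $Q$ is an answer set of $Q$ iff $M=T^\infty_Q(\emptyset,M)$. Instance: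 for a rule $r$ and set $M$, $inst(r,M)=\{b\leftarrow body(r)\mid b\in M\cap head(r)_d\}$ if $M\cap head(r)_d\in head(r)_c$, and $\emptyset$ otherwise; $inst(P,M)=\bigcup_{r\in P}inst(r,M)$. Marek–Remmel semantics: the closure of $A$ is $\widehat A=(A_d,\{Y\subseteq A_d\mid \exists Z\in A_c,\ Z\subseteq Y\})$. $NSS(P,M)$ is obtained by (i) removing every rule whose body is not satisfied by $M$, and (ii) replacing each remaining rule $A\leftarrow e_1,\dots,e_n,A_1,\dots,A_m$ (with $e_i$ elementary and $A_j$ non-elementary) by the rules $a\leftarrow e_1,\dots,e_n,\widehat{A_1},\dots,\widehat{A_m}$ for each $a\in A_d\cap M$. For such a program $Q'$ (elementary heads, elementary or closed body c-atoms) the operator $T_{Q'}(X)=\{a\mid\exists r\in Q',\ head(r)=a,\ X\models body(r)\}$ is monotone and has a least fixpoint $M^{Q'}$. A model $S$ of $P$ is a Marek–Remmel answer set iff $S=M^{NSS(P,S)}$. *)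

From Stdlib Require Import List.
Import ListNotations.

(* The countable set of atoms is taken to be nat. *)
Definition atom := nat.
Definition aset := atom -> Prop.
Definition seteq (X Y : aset) : Prop := forall a, X a <-> Y a.
Definition subset (X Y : aset) : Prop := forall a, X a -> Y a.
Definition inter (X Y : aset) : aset := fun a => X a /\ Y a.
Definition single (p : atom) : aset := fun a => a = p.

(* c-atom A = (A_d, A_c); A_c is a family of sets, membership taken up to
   extensional equality of sets (see in_c). *)
Record catom := mkCatom { dom : aset; cont : aset -> Prop }.

Definition in_c (A : catom) (X : aset) : Prop :=
  exists Z, cont A Z /\ seteq Z X.

Definition wf_catom (A : catom) : Prop :=
  forall Z, cont A Z -> subset Z (dom A).

Definition elem (p : atom) : catom :=
  mkCatom (single p) (fun Z => seteq Z (single p)).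
Definition bot : catom := mkCatom (fun _ => True) (fun _ => False).

Definition elementary (A : catom) : Prop :=
  exists p, seteq (dom A) (single p) /\
            forall X, in_c A X <-> seteq X (single p).

Record rule := mkRule { head : catom; body : list catom }.
Definition program := rule -> Prop.

Definition wf_program (P : program) : Prop :=
  forall r, P r -> wf_catom (head r) /\ Forall wf_catom (body r).

Definition sat (S : aset) (A : catom) : Prop := in_c A (inter S (dom A)).
Definition sat_body (S : aset) (bd : list catom) : Prop :=
  forall B, In B bd -> sat S B.
Definition sat_rule (S : aset) (r : rule) : Prop :=
  sat_body S (body r) -> sat S (head r).
Definition model (P : program) (S : aset) : Prop :=
  forall r, P r -> sat_rule S r.

Definition csat (S M : aset) (A : catom) : Prop :=
  sat S A /\
  forall I, subset (inter S (dom A)) I -> subset I (inter M (dom A)) -> in_c A I.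

Definition TQ (Q : program) (M : aset) (S : aset) : aset :=
  fun a => exists r, Q r /\ head r = elem a /\
                     forall B, In B (body r) -> csat S M B.

Fixpoint Titer (Q : program) (M : aset) (n : nat) : aset :=
  match n with
  | O => fun _ => False
  | S n' => TQ Q M (Titer Q M n')
  end.

Definition Tinf (Q : program) (M : aset) : aset :=
  fun a => exists n, Titer Q M n a.

Definition answer_set_basic (Q : program) (M : aset) : Prop :=
  model Q M /\ seteq M (Tinf Q M).

Definition inst (P : program) (M : aset) : program :=
  fun r' => exists r b, P r /\ sat M (head r) /\ dom (head r) b /\ M b /\
                        r' = mkRule (elem b) (body r).

Definition closure (A : catom) : catom :=
  mkCatom (dom A) (fun Y => subset Y (dom A) /\ exists Z, cont A Z /\ subset Z Y).

(* rules of NSS(P,M): elementary head a, body of elementary / closed c-atoms *)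
Definition nss_rule := (atom * list catom)%type.

Definition nss_atom (B B' : catom) : Prop :=
  (elementary B /\ B' = B) \/ (~ elementary B /\ B' = closure B).

Definition NSS (P : program) (M : aset) : nss_rule -> Prop :=
  fun q => exists r, P r /\ sat_body M (body r) /\
                     dom (head r) (fst q) /\ M (fst q) /\
                     Forall2 nss_atom (body r) (snd q).

Definition T_NSS (Q : nss_rule -> Prop) (X : aset) : aset :=
  fun a => exists bd, Q (a, bd) /\ sat_body X bd.

Definition is_lfp (T : aset -> aset) (S : aset) : Prop :=
  seteq (T S) S /\ forall X, seteq (T X) X -> subset S X.

Definition mr_answer_set (P : program) (S : aset) : Prop :=
  model P S /\ is_lfp (T_NSS (NSS P S)) S.

From Stdlib Require Import List Classical.
Import ListNotations.

(* Every atom a of the iteration T^{n+1} is derived by an instance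
   a <- body(r) of a rule r of P whose head domain contains a, whose body
   holds conditionally w.r.t. M in S := T^n, hence (as S ⊆ M) holds in M.
   Such an r and a yield a rule of NSS(P,M): elementary body atoms are kept
   and the others closed.  The key observation is that whenever S ⊆ Y and S
   satisfies every body atom, Y satisfies the transformed body, because
   elementary c-atoms are monotone and a closed c-atom holds in Y as soon as
   some set of its content lies in Y.  Hence T^{n+1} ⊆ T_NSS(Y) whenever
   T^n ⊆ Y.  Taking Y = M shows M ⊆ T_NSS(M) (the converse inclusion is
   immediate from the definition of NSS); taking Y = X, any fixpoint of
   T_NSS, an induction on n shows M ⊆ X, so M is the least fixpoint. *)

Lemma list_choice {A B : Type} (R : A -> B -> Prop) (l : list A) :
  (forall x, In x l -> exists y, R x y) -> exists l', Forall2 R l l'.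
Proof.
  induction l as [|x l IH]; intros Htot.
  - exists []. constructor.
  - destruct (Htot x (or_introl eq_refl)) as [y Hy].
    destruct IH as [l' Hl'].
    + intros z Hz. apply Htot. now right.
    + exists (y :: l'). now constructor.
Qed.

Lemma Forall2_in_r {A B : Type} (R : A -> B -> Prop) l l' y :
  Forall2 R l l' -> In y l' -> exists x, R x y.
Proof.
  intros HF; induction HF as [|x y' l l' Hxy _ IH]; intros Hy.
  - destruct Hy.
  - destruct Hy as [<-|Hy]; [now exists x|exact (IH Hy)].
Qed.

Lemma elementary_sat_mono (S Y : aset) (B : catom) :
  elementary B -> subset S Y -> sat S B -> sat Y B.
Proof.
  intros [p [Hdom Hcont]] HSY HS.
  apply Hcont in HS. apply Hcont. intro x. split.
  - intros [_ Hx]. now apply Hdom.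
  - intros Hx. destruct (proj2 (HS x) Hx) as [HSx Hdx]. split; auto.
Qed.

Lemma closure_sat (Y : aset) (B : catom) (Z : aset) :
  cont B Z -> subset Z (inter Y (dom B)) -> sat Y (closure B).
Proof.
  intros HZ HZY. exists (inter Y (dom B)). simpl. split; [|intro; tauto].
  split; [intros a [_ Ha]; exact Ha|]. now exists Z.
Qed.

Lemma nss_atom_sat (S Y : aset) (B : catom) :
  subset S Y -> sat S B -> exists B', nss_atom B B' /\ sat Y B'.
Proof.
  intros HSY HS. destruct (classic (elementary B)) as [Helem|Hnelem].
  - exists B. split; [now left|]. exact (elementary_sat_mono S Y B Helem HSY HS).
  - exists (closure B). split; [now right|].
    destruct HS as [Z [HZ HZS]]. apply (closure_sat Y B Z HZ).
    intros x Hx. destruct (proj1 (HZS x) Hx). split; auto.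
Qed.

Lemma nss_body_sat (S Y : aset) (bd : list catom) :
  subset S Y -> sat_body S bd ->
  exists bd', Forall2 nss_atom bd bd' /\ sat_body Y bd'.
Proof.
  intros HSY HS.
  destruct (list_choice (fun B B' => nss_atom B B' /\ sat Y B') bd) as [bd' Hbd'].
  - intros B HB. exact (nss_atom_sat S Y B HSY (HS B HB)).
  - exists bd'. split.
    + eapply Forall2_impl; [|exact Hbd']. simpl. tauto.
    + intros B' HB'. destruct (Forall2_in_r _ _ _ _ Hbd' HB') as [B [_ HY]]. exact HY.
Qed.

Lemma csat_sat (S M : aset) (B : catom) : subset S M -> csat S M B -> sat M B.
Proof.
  intros HSM [_ Hall]. apply Hall.
  - intros a [Ha Hd]. split; auto.
  - intros a Ha. exact Ha.
Qed.

Lemma elem_inj (a b : atom) : elem a = elem b -> a = b.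
Proof.
  intro Hab. assert (Hdom : dom (elem a) = dom (elem b)) by now rewrite Hab.
  assert (Ha : single a a) by reflexivity.
  simpl in Hdom. rewrite Hdom in Ha. exact Ha.
Qed.

Section AnswerSetOfInstance.

Variables (P : program) (M : aset).
Hypothesis M_fixpoint : seteq M (Tinf (inst P M) M).

Lemma Titer_sub_M (n : nat) : subset (Titer (inst P M) M n) M.
Proof. intros a Ha. apply M_fixpoint. now exists n. Qed.

Lemma Titer_step_rule (n : nat) (a : atom) :
  Titer (inst P M) M (S n) a ->
  exists r, P r /\ dom (head r) a /\ M a /\
            forall B, In B (body r) -> csat (Titer (inst P M) M n) M B.
Proof.
  intros [r' [[r [b [Pr [_ [Hdb [Hmb ->]]]]]] [Hhead Hbody]]].
  simpl in Hhead, Hbody. apply elem_inj in Hhead. subst b.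
  now exists r.
Qed.

Lemma Titer_step_TNSS (n : nat) (Y : aset) :
  subset (Titer (inst P M) M n) Y ->
  subset (Titer (inst P M) M (S n)) (T_NSS (NSS P M) Y).
Proof.
  intros HY a Ha.
  destruct (Titer_step_rule n a Ha) as [r [Pr [Hda [Ma Hcsat]]]].
  assert (HbodyM : sat_body M (body r)).
  { intros B HB. exact (csat_sat _ M B (Titer_sub_M n) (Hcsat B HB)). }
  assert (HbodyS : sat_body (Titer (inst P M) M n) (body r)).
  { intros B HB. exact (proj1 (Hcsat B HB)). }
  destruct (nss_body_sat _ Y (body r) HY HbodyS) as [bd [Hnss HbdY]].
  exists bd. split; [|exact HbdY].
  exists r. simpl. auto.
Qed.

Lemma TNSS_fixpoint : seteq (T_NSS (NSS P M) M) M.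
Proof.
  intro a. split.
  - intros [bd [[r [_ [_ [_ [Ma _]]]]] _]]. exact Ma.
  - intro Ma. destruct (proj1 (M_fixpoint a) Ma) as [[|n] Hn]; [destruct Hn|].
    exact (Titer_step_TNSS n M (Titer_sub_M n) a Hn).
Qed.

Lemma TNSS_least (X : aset) : seteq (T_NSS (NSS P M) X) X -> subset M X.
Proof.
  intros HX a Ma. destruct (proj1 (M_fixpoint a) Ma) as [n Hn]. clear Ma.
  revert a Hn.
  induction n as [|n IH]; intros a Hn; [destruct Hn|].
  apply HX. exact (Titer_step_TNSS n X IH a Hn).
Qed.

End AnswerSetOfInstance.

Theorem proposition7 (P : program) (M : aset) :
  wf_program P ->
  model P M ->
  answer_set_basic (inst P M) M ->
  mr_answer_set P M.
Proof.
  intros _ Hmodel [_ Hfix]. split; [exact Hmodel|]. split.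
  - exact (TNSS_fixpoint P M Hfix).
  - exact (TNSS_least P M Hfix).
Qed.
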